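(* Let $X$ be a random variable, $Z$ a random variable jointly distributed with $X$, and $f,g$ real functions with $\mathbb{E}[f(X)^2],\mathbb{E}[g(X)^2]<\infty$ and $\operatorname{Var}[g(X)]>0$. If $\operatorname{Var}(\mathbb{E}[g(X)\mid Z])=0$, then $$\operatorname{Var}\mathbb{E}[f(X)\mid Z]\le\operatorname{Var}[f(X)]-\frac{\operatorname{Cov}(f(X),g(X))^2}{\operatorname{Var}[g(X)]}.$$ *)

From HB Require Import structures.
From mathcomp Require Import all_boot all_order all_algebra.
From mathcomp Require Import all_classical all_reals all_analysis.
Set Implicit Arguments. Unset Strict Implicit. Unset Printing Implicit Defensive.
Import Order.TTheory GRing.Theory Num.Theory.
Local Open Scope classical_set_scope.
Local Open Scope ring_scope.

(* W is a version of the conditional expectation E[Y | Z] (conditioning on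
   the sigma-algebra generated by Z : T -> S):
   W is sigma(Z)-measurable (written, via Doob-Dynkin, as W = h o Z with h
   measurable), integrable, and for every measurable B,
   E[Y 1_{Z in B}] = E[W 1_{Z in B}]. *)
Definition is_cond_exp {d} {T : measurableType d} {dS} {S : measurableType dS}
  {R : realType} (P : probability T R) (Y : T -> R) (Z : T -> S) (W : T -> R) :=
  (exists h : S -> R, measurable_fun setT h /\ W = h \o Z) /\
  P.-integrable setT (EFin \o W) /\
  (forall B : set S, measurable B ->
     (\int[P]_(w in Z @^-1` B) (Y w)%:E = \int[P]_(w in Z @^-1` B) (W w)%:E)%E).

From HB Require Import structures.
From mathcomp Require Import all_boot all_order all_algebra.
From mathcomp Require Import all_classical all_reals all_analysis.
From mathcomp Require Import measurable_realfun lra.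
Set Implicit Arguments.
Unset Strict Implicit.
Unset Printing Implicit Defensive.
Import Order.TTheory GRing.Theory Num.Theory.
Import HBSimple HBNNSimple.
Local Open Scope classical_set_scope.
Local Open Scope ring_scope.

(* Let W = E[f(X) | Z]. Testing the defining identity of W against truncations
   of W shows that W is square integrable; approximating by simple functions,
   the identity extends to Cov(phi(Z), Y) = Cov(phi(Z), E[Y | Z]) for every
   square integrable phi(Z). Hence U = f(X) - W is uncorrelated with W, so that
   Var f(X) = Var W + Var U, and, E[g(X) | Z] being almost surely constant, W is
   uncorrelated with g(X), so that Cov(f(X), g(X)) = Cov(U, g(X)). Finally
   Cauchy-Schwarz gives Cov(U, g(X))^2 <= Var U * Var g(X). *)

Section integrability.
Local Open Scope ereal_scope.
Context d (T : measurableType d) (R : realType).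
Context (mu : {measure set T -> \bar R}).

Lemma integrable_mul_bounded (V b : T -> R) (c : R) :
  mu.-integrable setT (EFin \o V) -> measurable_fun setT b ->
  (forall t, `|b t| <= c)%R -> mu.-integrable setT (fun t => (V t * b t)%:E).
Proof.
move=> iV mb b_le; have /measurable_EFinP mV := measurable_int mu iV.
apply: (@le_integrable _ _ _ _ _ measurableT _ (fun t => (c * V t)%:E)).
- by apply/measurable_EFinP; exact: measurable_funM.
- move=> t _; rewrite lee_fin !normrM mulrC ler_wpM2r//.
  by rewrite (le_trans (b_le t)) // ler_norm.
- by under eq_fun do rewrite EFinM; exact: integrableZl.
Qed.

Lemma integrable_sqr_Lfun2 (V : T -> R) : measurable_fun setT V ->
  mu.-integrable setT (EFin \o (fun t => V t ^+ 2)%R) -> V \in Lfun mu 2%:E.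
Proof.
move=> mV /integrableP[_ V2_fin].
rewrite inE; apply/andP; split; first by rewrite inE.
rewrite inE /= /finite_norm unlock /= poweR_lty//; apply: le_lt_trans V2_fin.
apply: ge0_le_integral => //.
- apply/measurable_EFinP.
  apply: (@measurableT_comp _ _ _ _ _ _ (fun x : R => x `^ 2)%R) => //.
  exact: measurableT_comp.
- by apply/measurableT_comp/measurable_EFinP => //; exact: measurable_funX.
- by move=> t _ /=; rewrite lee_fin normrX powR_mulrn.
Qed.

End integrability.

Section dominated_sfun_approximation.
Local Open Scope ereal_scope.
Context d (T : measurableType d) (R : realType).

Lemma dominated_sfun_approximation (phi : T -> R) : measurable_fun setT phi ->
  exists s : {sfun T >-> R}^nat,
    (forall n t, `|s n t| <= `|phi t|)%R /\
    (forall t, EFin \o s ^~ t @ \oo --> (phi t)%:E).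
Proof.
move=> mphi.
have mp : measurable_fun setT (EFin \o (phi^\+)%R).
  exact/measurable_EFinP/measurable_funrpos.
have mn : measurable_fun setT (EFin \o (phi^\-)%R).
  exact/measurable_EFinP/measurable_funrneg.
have p0 t : setT t -> 0 <= (EFin \o (phi^\+)%R) t.
  by rewrite lee_fin funrpos_ge0.
have n0 t : setT t -> 0 <= (EFin \o (phi^\-)%R) t.
  by rewrite lee_fin funrneg_ge0.
pose sp := nnsfun_approx measurableT mp.
pose sn := nnsfun_approx measurableT mn.
exists (fun n => (sp n : {sfun T >-> R}) - (sn n : {sfun T >-> R}))%R.
split => [n t|t].
  have sp_le : (sp n t <= (phi^\+)%R t)%R.
    by rewrite /sp nnsfun_approxE -lee_fin; exact: le_approx.
  have sn_le : (sn n t <= (phi^\-)%R t)%R.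
    by rewrite /sn nnsfun_approxE -lee_fin; exact: le_approx.
  rewrite sfunB /= (le_trans (ler_normB _ _))// [`|sp n t|%R]ger0_norm //.
  rewrite [`|sn n t|%R]ger0_norm //.
  have -> : (`|phi t| = (phi^\+)%R t + (phi^\-)%R t)%R.
    by have /(congr1 (fun F => F t)) := funrposDneg phi.
  exact: lerD.
rewrite -[in X in _ --> X](funrposBneg phi) /= EFinB.
rewrite [X in X @ \oo --> _](_ : _ = fun n => (sp n t)%:E - (sn n t)%:E).
  by apply: cvgeB; [exact: fin_num_adde_defl|exact: cvg_nnsfun_approx..].
by apply/funext => n /=; rewrite ?sfunB EFinB.
Qed.

End dominated_sfun_approximation.

Section cond_exp_integral_mul.
Local Open Scope ereal_scope.
Context d (T : measurableType d) (R : realType).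
Context (mu : {measure set T -> \bar R}).
Context dS (S : measurableType dS) (Z : T -> S).
Hypothesis mZ : measurable_fun setT Z.

Lemma integral_mul_indic_comp (V : T -> R) (B : set S) :
  \int[mu]_t (V t * \1_B (Z t))%:E = \int[mu]_(t in Z @^-1` B) (V t)%:E.
Proof.
rewrite [RHS]integral_mkcond; apply: eq_integral => t _.
rewrite patchE indicE; change (Z t \in B) with (t \in Z @^-1` B).
by case: ifP; rewrite ?mulr1 ?mulr0.
Qed.

Lemma integral_mul_sfun_comp (V : T -> R) (s : {sfun S >-> R}) :
  mu.-integrable setT (EFin \o V) ->
  \int[mu]_t (V t * s (Z t))%:E =
  \sum_(y \in range s)
    y%:E * \int[mu]_(t in Z @^-1` (s @^-1` [set y])) (V t)%:E.
Proof.
move=> iV.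
have iV_indic (B : set S) : measurable B ->
    mu.-integrable setT (fun t => (V t * \1_B (Z t))%:E).
  move=> mB; apply: (integrable_mul_bounded (c := 1%R)) => //.
    exact/measurableT_comp.
  by move=> t; rewrite indicE; case: (_ \in _); rewrite ?normr1 ?normr0.
have mpre (y : R) : measurable (s @^-1` [set y]) by exact: measurable_funPTI.
under eq_integral => t _ do rewrite fimfunE fsbig_finite// mulr_sumr -sumEFin.
rewrite integral_sum//; last first.
  move=> y; under eq_fun do rewrite mulrCA EFinM.
  by apply: integrableZl => //; exact: iV_indic (mpre y).
rewrite fsbig_finite//; apply: eq_bigr => y _.
under eq_integral do rewrite mulrCA EFinM.
by rewrite integralZl ?integral_mul_indic_comp //; exact: iV_indic (mpre y).
Qed.

Lemma cvg_integral_mul_dominated (V : T -> R) (phi : S -> R)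
    (s : (S -> R)^nat) :
  measurable_fun setT V -> (forall n, measurable_fun setT (s n)) ->
  (forall n z, `|s n z| <= `|phi z|)%R ->
  (forall z, EFin \o s ^~ z @ \oo --> (phi z)%:E) ->
  mu.-integrable setT (fun t => (V t * phi (Z t))%:E) ->
  (fun n => \int[mu]_t (V t * s n (Z t))%:E) @ \oo -->
    \int[mu]_t (V t * phi (Z t))%:E.
Proof.
move=> mV ms s_le s_cvg iVphi.
have [] := @dominated_convergence _ _ _ mu setT measurableT
  (fun n t => (V t * s n (Z t))%:E) (fun t => (V t * phi (Z t))%:E)
  (abse \o (fun t => (V t * phi (Z t))%:E)) => //.
- move=> n; apply/measurable_EFinP; apply: measurable_funM => //.
  exact: measurableT_comp.
- exact: measurable_int iVphi.
- apply: aeW => t _; under eq_fun do rewrite EFinM.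
  by rewrite EFinM; apply: cvgeZl => //; exact: s_cvg.
- exact: integrable_abse.
- by apply: aeW => t n _ /=; rewrite lee_fin !normrM ler_wpM2l.
Qed.

Variables Y W : T -> R.
Hypotheses (iY : mu.-integrable setT (EFin \o Y))
  (iW : mu.-integrable setT (EFin \o W)).
Hypothesis YW : forall B, measurable B ->
  \int[mu]_(t in Z @^-1` B) (Y t)%:E = \int[mu]_(t in Z @^-1` B) (W t)%:E.

Lemma cond_exp_mul_sfun (s : {sfun S >-> R}) :
  \int[mu]_t (Y t * s (Z t))%:E = \int[mu]_t (W t * s (Z t))%:E.
Proof.
rewrite !integral_mul_sfun_comp//; apply: eq_fsbigr => y _.
by rewrite YW//; exact: measurable_funPTI.
Qed.

Lemma cond_exp_mul (phi : S -> R) : measurable_fun setT phi ->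
  mu.-integrable setT (fun t => (Y t * phi (Z t))%:E) ->
  mu.-integrable setT (fun t => (W t * phi (Z t))%:E) ->
  \int[mu]_t (Y t * phi (Z t))%:E = \int[mu]_t (W t * phi (Z t))%:E.
Proof.
move=> mphi iYphi iWphi.
have [s [s_le s_cvg]] := dominated_sfun_approximation mphi.
have ms n : measurable_fun setT (s n) by [].
have /measurable_EFinP mY := measurable_int mu iY.
have /measurable_EFinP mW := measurable_int mu iW.
have cvgY :=
  cvg_integral_mul_dominated (s := fun n => s n) mY ms s_le s_cvg iYphi.
have cvgW :=
  cvg_integral_mul_dominated (s := fun n => s n) mW ms s_le s_cvg iWphi.
have sYW : (fun n => \int[mu]_t (Y t * s n (Z t))%:E) =
           (fun n => \int[mu]_t (W t * s n (Z t))%:E).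
  by apply: funext => n; exact: cond_exp_mul_sfun.
rewrite sYW in cvgY.
by rewrite -(cvg_lim _ cvgY) // -(cvg_lim _ cvgW).
Qed.

End cond_exp_integral_mul.

Section truncation.
Context d (S : measurableType d) (R : realType) (h : S -> R).

Definition truncation (n : nat) (z : S) : R :=
  h z * \1_(h @^-1` `[- n%:R, n%:R]%classic) z.

Lemma truncationE n z : truncation n z = if `|h z| <= n%:R then h z else 0.
Proof.
rewrite /truncation indicE.
have [hz|hz] := boolP (`|h z| <= n%:R).
  by rewrite mem_set ?mulr1 //= in_itv -ler_norml.
by rewrite memNset ?mulr0 //= in_itv -ler_norml; exact/negP.
Qed.

Lemma truncation_bound n z : `|truncation n z| <= n%:R.
Proof. by rewrite truncationE; case: ifP => // _; rewrite normr0. Qed.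

Lemma measurable_truncation n :
  measurable_fun setT h -> measurable_fun setT (truncation n).
Proof.
move=> mh; apply: measurable_funM => //; apply: measurable_indic.
by rewrite -[_ @^-1` _]setTI; apply: mh => //; exact: measurable_itv.
Qed.

Lemma mul_truncation n z : h z * truncation n z = truncation n z ^+ 2.
Proof. by rewrite truncationE; case: ifP; rewrite ?expr2 ?mulr0. Qed.

Lemma nd_truncation_sqr z : nondecreasing_seq (fun n => truncation n z ^+ 2).
Proof.
move=> n m nm; rewrite !truncationE; case: ifPn => [hn|_].
  by have -> : `|h z| <= m%:R by rewrite (le_trans hn) ?ler_nat.
by rewrite expr0n sqr_ge0.
Qed.

Lemma truncation_near z : \forall n \near \oo, truncation n z = h z.
Proof.
by apply: filterS (nbhs_infty_ger `|h z|) => n hn; rewrite truncationE hn.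
Qed.

End truncation.

Section cond_exp_Lfun2.
Local Open Scope ereal_scope.
Context d (T : measurableType d) (R : realType) (P : probability T R).
Context dS (S : measurableType dS) (Z : T -> S).
Hypothesis mZ : measurable_fun setT Z.
Variables (Y : T -> R) (h : S -> R).
Hypotheses (mh : measurable_fun setT h) (Y2 : Y \in Lfun P 2%:E).
Hypothesis iW : P.-integrable setT (EFin \o (h \o Z)).
Hypothesis YW : forall B, measurable B ->
  \int[P]_(t in Z @^-1` B) (Y t)%:E = \int[P]_(t in Z @^-1` B) ((h \o Z) t)%:E.

Let iY : P.-integrable setT (EFin \o Y).
Proof.
by apply/Lfun1_integrable/Lfun_subset12 => //; exact: fin_num_measure.
Qed.

Lemma integral_truncation_sqr_le n :
  \int[P]_t (truncation h n (Z t) ^+ 2)%:E <= \int[P]_t (Y t ^+ 2)%:E.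
Proof.
have mtZ : measurable_fun setT (truncation h n \o Z).
  exact: measurableT_comp (measurable_truncation n mh) mZ.
have tZ_le t : (`|(truncation h n \o Z) t| <= n%:R)%R.
  exact: truncation_bound.
have iYt := integrable_mul_bounded iY mtZ tZ_le.
have iWt := integrable_mul_bounded iW mtZ tZ_le.
have it2 : P.-integrable setT (EFin \o (fun t => truncation h n (Z t) ^+ 2)%R).
  by apply: eq_integrable iWt => // t _; rewrite /= mul_truncation.
have iY2 := Lfun2_integrable_sqr Y2.
(* For the truncation t of h, E[Y t] = E[t^2] and 2 Y t <= Y^2 + t^2. *)
have cross : \int[P]_t (Y t * truncation h n (Z t))%:E =
             \int[P]_t (truncation h n (Z t) ^+ 2)%:E.
  rewrite (cond_exp_mul mZ iY iW YW (measurable_truncation n mh) iYt iWt).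
  by apply: eq_integral => t _; rewrite /= mul_truncation.
have : 2%:E * \int[P]_t (truncation h n (Z t) ^+ 2)%:E <=
       \int[P]_t (Y t ^+ 2)%:E + \int[P]_t (truncation h n (Z t) ^+ 2)%:E.
  rewrite -{1}cross -integralZl // -integralD //.
  apply: le_integral => //; first exact: integrableZl.
    exact: integrableD.
  move=> t _; rewrite -EFinM -EFinD lee_fin.
  by have := sqr_ge0 (Y t - truncation h n (Z t)); nra.
rewrite -(fineK (integrable_fin_num measurableT it2)).
rewrite -(fineK (integrable_fin_num measurableT iY2)).
by rewrite -EFinM -EFinD !lee_fin; lra.
Qed.

Lemma cond_exp_comp_Lfun2 : (h \o Z) \in Lfun P 2%:E.
Proof.
have mhZ : measurable_fun setT (h \o Z) := measurableT_comp mh mZ.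
apply: integrable_sqr_Lfun2 => //; apply/integrableP; split.
  exact/measurable_EFinP/measurable_funX.
pose tZ2 n t := (truncation h n (Z t) ^+ 2)%:E.
have mtZ2 n : measurable_fun setT (tZ2 n).
  apply/measurable_EFinP/measurable_funX/measurableT_comp => //.
  exact: measurable_truncation.
have tZ2_ge0 n t : setT t -> 0 <= tZ2 n t by rewrite lee_fin sqr_ge0.
have nd_tZ2 t : setT t -> nondecreasing_seq (tZ2 ^~ t).
  by move=> _ n m nm; rewrite lee_fin; exact: nd_truncation_sqr.
have lim_tZ2 t : limn (tZ2 ^~ t) = (h (Z t) ^+ 2)%:E.
  apply: lim_near_cst => //; apply: filterS (truncation_near h (Z t)) => n tn.
  by rewrite /tZ2 tn.
have Y2_fin : \int[P]_t (Y t ^+ 2)%:E < +oo.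
  have iY2 := Lfun2_integrable_sqr Y2.
  by rewrite -(fineK (integrable_fin_num measurableT iY2)) ltry.
rewrite (eq_integral (fun t => limn (tZ2 ^~ t))); last first.
  by move=> t _; rewrite lim_tZ2 /= ger0_norm // sqr_ge0.
rewrite (monotone_convergence P measurableT mtZ2 tZ2_ge0 nd_tZ2).
apply: le_lt_trans Y2_fin; apply: lime_le.
  apply: ereal_nondecreasing_is_cvgn => n m nm.
  by apply: ge0_le_integral => // t _; [exact: tZ2_ge0|exact: nd_tZ2].
by apply: nearW => n; exact: integral_truncation_sqr_le.
Qed.

End cond_exp_Lfun2.

Section variance_lemmas.
Local Open Scope ereal_scope.
Context d (T : measurableType d) (R : realType) (P : probability T R).

Lemma variance_eq0_ae_cst (W : T -> R) : measurable_fun setT W ->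
  'V_P[W] = 0 -> {ae P, forall t, W t = fine 'E_P[W]}.
Proof.
move=> mW; set c := fine 'E_P[W]; rewrite /variance unlock -/c unlock => V0.
have : ae_eq P setT (fun t => ((W t - c) * (W t - c))%:E) (cst 0).
  apply/ae_eq_integral_abs => //.
    by apply/measurable_EFinP; apply: measurable_funM; exact: measurable_funB.
  rewrite -V0; apply: eq_integral => t _.
  by rewrite gee0_abs // lee_fin -expr2 sqr_ge0.
apply: filterS => t /(_ I) /= /eqP.
by rewrite eqe mulf_eq0 orbb subr_eq0 => /eqP.
Qed.

Lemma covariance_sqr_le (X Y : T -> R) :
  X \in Lfun P 2%:E -> Y \in Lfun P 2%:E ->
  (fine (covariance P X Y) ^+ 2 <= fine 'V_P[X] * fine 'V_P[Y])%R.
Proof.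
move=> X2 Y2.
have P_fin : P setT \is a fin_num := fin_num_measure P _ measurableT.
have X1 := Lfun_subset12 P_fin X2; have Y1 := Lfun_subset12 P_fin Y2.
have XY1 := Lfun2_mul_Lfun1 X2 Y2.
have NX2 : (\- X)%R \in Lfun P 2%:E by rewrite rpredN.
have := covariance_le NX2 Y2; rewrite covarianceNl // varianceN //.
move: (covariance_le X2 Y2).
rewrite -(fineK (variance_fin_num X2)) -(fineK (variance_fin_num Y2)).
rewrite -(fineK (covariance_fin_num X1 Y1 XY1)) /= -!EFinM !lee_fin.
move=> le1 le2.
have s0 : (0 <= Num.sqrt (fine 'V_P[X]) * Num.sqrt (fine 'V_P[Y]))%R.
  by rewrite mulr_ge0 ?sqrtr_ge0.
have s2 : ((Num.sqrt (fine 'V_P[X]) * Num.sqrt (fine 'V_P[Y])) ^+ 2 =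
           fine 'V_P[X] * fine 'V_P[Y])%R.
  by rewrite exprMn !sqr_sqrtr // fine_ge0 // variance_ge0.
by rewrite -s2; nra.
Qed.

Lemma variance_le_sub_covariance_sqr (W U G : T -> R) :
  W \in Lfun P 2%:E -> U \in Lfun P 2%:E -> G \in Lfun P 2%:E -> 0 < 'V_P[G] ->
  covariance P W U = 0 -> covariance P W G = 0 ->
  'V_P[W] <= 'V_P[(W \+ U)%R]
             - ((fine (covariance P (W \+ U)%R G)) ^+ 2 / fine 'V_P[G])%:E.
Proof.
move=> W2 U2 G2 VG_gt0 WU0 WG0.
rewrite varianceD // WU0 mule0 adde0 covarianceDl // WG0 add0e.
have VG_gt0' : (0 < fine 'V_P[G])%R.
  by rewrite -lte_fin fineK // variance_fin_num.
have CS : ((fine (covariance P U G)) ^+ 2 / fine 'V_P[G] <= fine 'V_P[U])%R.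
  by rewrite ler_pdivrMr //; exact: covariance_sqr_le.
rewrite -(fineK (variance_fin_num W2)) -(fineK (variance_fin_num U2)).
by rewrite -EFinD lee_fin; lra.
Qed.

End variance_lemmas.

Section cond_exp_covariance.
Local Open Scope ereal_scope.
Context d (T : measurableType d) (R : realType) (P : probability T R).
Context dS (S : measurableType dS) (Z : T -> S).
Hypothesis mZ : measurable_fun setT Z.

Lemma is_cond_exp_Lfun2 (Y W : T -> R) :
  Y \in Lfun P 2%:E -> is_cond_exp P Y Z W -> W \in Lfun P 2%:E.
Proof.
by move=> Y2 [[h [mh ->]] [iW YW]]; exact: (cond_exp_comp_Lfun2 mZ mh Y2 iW YW).
Qed.

Lemma expectation_cond_exp (Y W : T -> R) :
  is_cond_exp P Y Z W -> 'E_P[W] = 'E_P[Y].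
Proof.
move=> [_ [_ YW]]; have := YW setT measurableT.
by rewrite preimage_setT unlock => ->.
Qed.

Lemma covariance_cond_exp (Y W V : T -> R) (phi : S -> R) :
  Y \in Lfun P 2%:E -> is_cond_exp P Y Z W ->
  measurable_fun setT phi -> V = phi \o Z -> V \in Lfun P 2%:E ->
  covariance P V Y = covariance P V W.
Proof.
move=> Y2 YW mphi VE V2.
have W2 := is_cond_exp_Lfun2 Y2 YW.
have P_fin : P setT \is a fin_num := fin_num_measure P _ measurableT.
have V1 := Lfun_subset12 P_fin V2; have Y1 := Lfun_subset12 P_fin Y2.
have W1 := Lfun_subset12 P_fin W2.
have VY1 := Lfun2_mul_Lfun1 V2 Y2; have VW1 := Lfun2_mul_Lfun1 V2 W2.
have [_ [iW YW_pre]] := YW.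
have iY : P.-integrable setT (EFin \o Y) by exact/Lfun1_integrable.
have iYphi : P.-integrable setT (fun t => (Y t * phi (Z t))%:E).
  by have /Lfun1_integrable := Lfun2_mul_Lfun1 Y2 V2; rewrite VE.
have iWphi : P.-integrable setT (fun t => (W t * phi (Z t))%:E).
  by have /Lfun1_integrable := Lfun2_mul_Lfun1 W2 V2; rewrite VE.
rewrite !covarianceE // (expectation_cond_exp YW).
congr (_ - _); rewrite unlock; transitivity (\int[P]_t (Y t * phi (Z t))%:E).
  by apply: eq_integral => t _; rewrite VE mulrC.
rewrite (cond_exp_mul mZ iY iW YW_pre mphi iYphi iWphi).
by apply: eq_integral => t _; rewrite VE mulrC.
Qed.

Lemma is_cond_exp_variance_eq0 (Y W : T -> R) :
  is_cond_exp P Y Z W -> 'V_P[W] = 0 -> is_cond_exp P Y Z (cst (fine 'E_P[W])).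
Proof.
move=> [_ [iW YW]] V0; have /measurable_EFinP mW := measurable_int P iW.
split.
  by exists (cst (fine 'E_P[W])); split; [exact: measurable_cst|].
split.
  exact/Lfun1_integrable/Lfun_cst.
move=> B mB; rewrite YW //; apply: ae_eq_integral.
- by rewrite -[Z @^-1` B]setTI; exact: mZ.
- by apply: measurable_funTS; exact/measurable_EFinP.
- by apply/measurable_EFinP; exact: measurable_cst.
- by apply: filterS (variance_eq0_ae_cst mW V0) => t /= -> _.
Qed.

End cond_exp_covariance.

Theorem corollary4 (d : measure_display) (T : measurableType d) (R : realType)
  (P : probability T R)
  (dX : measure_display) (SX : measurableType dX)
  (dZ : measure_display) (SZ : measurableType dZ)
  (X : T -> SX) (Z : T -> SZ) (f g : SX -> R)
  (cf cg : T -> R) :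
  measurable_fun setT X -> measurable_fun setT Z ->
  (f \o X) \in Lfun P 2%:E -> (g \o X) \in Lfun P 2%:E ->
  ('V_P[g \o X] > 0)%E ->
  is_cond_exp P (f \o X) Z cf -> is_cond_exp P (g \o X) Z cg ->
  'V_P[cg] = 0%E ->
  ('V_P[cf] <= 'V_P[f \o X]
     - ((fine (covariance P (f \o X) (g \o X))) ^+ 2
          / fine 'V_P[g \o X])%:E)%E.
Proof.
move=> _ mZ Yf2 Yg2 VYg_gt0 cef ceg Vcg0.
have cf2 := is_cond_exp_Lfun2 mZ Yf2 cef.
have [[hf [mhf cfE]] _] := cef.
have resid2 : (f \o X \- cf)%R \in Lfun P 2%:E.
  by have /(_ (lee1n 2)) := rpredB Yf2 cf2.
have -> : f \o X = (cf \+ (f \o X \- cf))%R.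
  by apply/funext => t /=; rewrite addrC subrK.
apply: variance_le_sub_covariance_sqr => //.
  rewrite covarianceBr // (covariance_cond_exp mZ Yf2 cef mhf cfE cf2) subee //.
  exact: variance_fin_num cf2.
have ceg_cst := is_cond_exp_variance_eq0 mZ ceg Vcg0.
rewrite (covariance_cond_exp mZ Yg2 ceg_cst mhf cfE cf2).
exact: covariance_cst_r.
Qed.
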